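(* Consider the discrete-time system with sensor and actuator attacks described in the context. Let $q$ be the largest integer such that for every $J_s\subset\{1,\ldots,n_y\}$ with $\card(J_s)\ge n_y-2q>0$ a complete UIO for $J_s$ exists, and suppose the set of attacked sensors satisfies $\card(W_y)\le q<\frac{n_y}{2}$ (the actuator attack $a_u$ is arbitrary; all actuators may be attacked). Run a complete UIO $\hat x_{J_s}$ for each $J_s\subset\{1,\dots,n_y\}$ with $\card(J_s)=n_y-q$ and a complete UIO $\hat x_{S_s}$ for each $S_s\subset\{1,\dots,n_y\}$ with $\card(S_s)=n_y-2q$. For each $k\ge0$ and each $J_s$ with $\card(J_s)=n_y-q$ define $$\pi_{J_s}(k)=\max_{S_s\subset J_s,\ \card(S_s)=n_y-2q}|\hat x_{J_s}(k)-\hat x_{S_s}(k)|,$$ let $\sigma_s(k)$ be a minimizer of $\pi_{J_s}(k)$ over all $J_s\subset\{1,\dots,n_y\}$ with $\card(J_s)=n_y-q$, and set $\hat x(k)=\hat x_{\sigma_s(k)}(k)$. Define $e(k)=\hat x_{\sigma_s(k)}(k)-x(k)$. Then there exists a class-$\mathcal{KL}$ function $\bar\beta$ such that $$|e(k)|\le\bar\beta(e_0,k)\quad\text{for all }k\ge0,\qquad e_0:=\max_{J_s:\card(J_s)=n_y-q,\ S_s:\card(S_s)=n_y-2q}\{|e_{J_s}(0)|,|e_{S_s}(0)|\},$$ where $e_{J_s}=\hat x_{J_s}-x$ and $e_{S_s}=\hat x_{S_s}-x$.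
   Context: System: $x(k+1)=f(x(k))+B(u(k)+a_u(k))$, $y(k)=h(x(k))+a_y(k)$, $k\in\mathbb{N}$, with state $x\in\mathbb{R}^n$, known input $u\in\mathbb{R}^{n_u}$, actuator attack $a_u\in\mathbb{R}^{n_u}$, output $y\in\mathbb{R}^{n_y}$, sensor attack $a_y=(a_{y1},\dots,a_{yn_y})^\top\in\mathbb{R}^{n_y}$ (attacks may be arbitrarily large), $f:\mathbb{R}^n\to\mathbb{R}^n$, $h:\mathbb{R}^n\to\mathbb{R}^{n_y}$, $B\in\mathbb{R}^{n\times n_u}$ of full column rank. The unknown set of attacked sensors is $W_y=\{i:a_{yi}(k)\ne0\text{ for some }k\ge0\}$, so $\supp(a_y(k))\subseteq W_y$ for all $k$ (it is time-invariant); similarly the attacked actuator set $W_u=\{i:a_{ui}(k)\ne0\text{ for some }k\ge0\}$ is time-invariant. For $J\subset\{1,\dots,n_y\}$, $y^J$, $a_y^J$ denote subvectors of components indexed by $J$. A complete UIO for $J_s$ is a system $\hat x_{J_s}(k+1)=f_{J_s}(\hat x_{J_s}(k),u(k),y^{J_s}(k),y^{J_s}(k+1))$ with $f_{J_s}:\mathbb{R}^n\times\mathbb{R}^{n_u}\times\mathbb{R}^{\card(J_s)}\times\mathbb{R}^{\card(J_s)}\to\mathbb{R}^n$ such that, with $e_{J_s}=\hat x_{J_s}-x$, there is a class-$\mathcal{KL}$ function $\beta_{J_s}$ with $|e_{J_s}(k)|\le\beta_{J_s}(|e_{J_s}(0)|,k)$ for all $k\ge0$, for all initial conditions $x(0),\hat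 x_{J_s}(0)\in\mathbb{R}^n$, all known inputs and all actuator attacks $a_u$, whenever $a_y^{J_s}(k)=0$ for all $k\ge0$. $|\cdot|$ is the Euclidean norm. *)

From HB Require Import structures.
From mathcomp Require Import all_boot all_order all_algebra.
From mathcomp Require Import all_classical all_reals all_analysis.
Set Implicit Arguments. Unset Strict Implicit. Unset Printing Implicit Defensive.
Import Order.TTheory GRing.Theory Num.Theory numFieldNormedType.Exports.
Local Open Scope ring_scope.
Local Open Scope classical_set_scope.

Section Defs.
Variable R : realType.

Definition enorm (m : nat) (v : 'cV[R]_m) : R := Num.sqrt (\sum_(i < m) (v i 0) ^+ 2).

Definition classK (alpha : R -> R) : Prop :=
  [/\ alpha 0 = 0,
      {within [set s : R | 0 <= s], continuous alpha} &
      forall s t, 0 <= s -> s < t -> alpha s < alpha t].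

Definition classKL (beta : R -> nat -> R) : Prop :=
  (forall k, classK (fun s => beta s k)) /\
  (forall s, 0 <= s ->
     (forall k, beta s k.+1 <= beta s k) /\ (fun k => beta s k) @ \oo --> 0).

(* subvector y^J of y indexed by J (components in increasing order) *)
Definition subv (ny : nat) (J : {set 'I_ny}) (y : 'cV[R]_ny) : 'cV[R]_#|J| :=
  \col_(i < #|J|) y (enum_val i) 0.

Fixpoint traj (n nu : nat) (f : 'cV[R]_n -> 'cV[R]_n) (B : 'M[R]_(n, nu))
  (x0 : 'cV[R]_n) (u au : nat -> 'cV[R]_nu) (k : nat) : 'cV[R]_n :=
  match k with
  | 0 => x0
  | k'.+1 => f (traj f B x0 u au k') + B *m (u k' + au k')
  end.

Definition outp (n ny : nat) (h : 'cV[R]_n -> 'cV[R]_ny) (x : nat -> 'cV[R]_n)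
  (ay : nat -> 'cV[R]_ny) (k : nat) : 'cV[R]_ny := h (x k) + ay k.

Fixpoint obs (n nu ny : nat) (J : {set 'I_ny})
  (fJ : 'cV[R]_n -> 'cV[R]_nu -> 'cV[R]_#|J| -> 'cV[R]_#|J| -> 'cV[R]_n)
  (xh0 : 'cV[R]_n) (u : nat -> 'cV[R]_nu) (y : nat -> 'cV[R]_ny) (k : nat)
  : 'cV[R]_n :=
  match k with
  | 0 => xh0
  | k'.+1 => fJ (obs fJ xh0 u y k') (u k') (subv J (y k')) (subv J (y k'.+1))
  end.

Definition complete_UIO (n nu ny : nat) (f : 'cV[R]_n -> 'cV[R]_n)
  (h : 'cV[R]_n -> 'cV[R]_ny) (B : 'M[R]_(n, nu)) (J : {set 'I_ny})
  (fJ : 'cV[R]_n -> 'cV[R]_nu -> 'cV[R]_#|J| -> 'cV[R]_#|J| -> 'cV[R]_n) : Prop :=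
  exists beta : R -> nat -> R, classKL beta /\
    forall (x0 xh0 : 'cV[R]_n) (u au : nat -> 'cV[R]_nu) (ay : nat -> 'cV[R]_ny),
      (forall k, subv J (ay k) = 0) ->
      let x := traj f B x0 u au in
      let e := fun k => obs fJ xh0 u (outp h x ay) k - x k in
      forall k, enorm (e k) <= beta (enorm (e 0%N)) k.

Definition Wy (ny : nat) (ay : nat -> 'cV[R]_ny) : {set 'I_ny} :=
  [set i : 'I_ny | `[< exists k, ay k i 0 <> 0 >]].

Definition q_prop (n nu ny : nat) (f : 'cV[R]_n -> 'cV[R]_n)
  (h : 'cV[R]_n -> 'cV[R]_ny) (B : 'M[R]_(n, nu)) (q : nat) : Prop :=
  (2 * q < ny)%N /\
  forall J : {set 'I_ny}, (ny - 2 * q <= #|J|)%N -> exists fJ : 'cV[R]_n -> 'cV[R]_nu -> 'cV[R]_#|J| -> 'cV[R]_#|J| -> 'cV[R]_n,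
    complete_UIO f h B fJ.

Definition piJ (n ny q : nat) (xhJ xhS : {set 'I_ny} -> nat -> 'cV[R]_n)
  (J : {set 'I_ny}) (k : nat) : R :=
  \big[Num.max/0]_(S : {set 'I_ny} | (S \subset J) && (#|S| == ny - 2 * q)%N)
     enorm (xhJ J k - xhS S k).

End Defs.

(* At most [q] sensors are attacked, so some set [Js] of [ny - q] sensors is
   attack-free; every observer fed only by attack-free sensors obeys its
   class-KL bound, hence [pi_Js] is small.  The minimiser [sigma] has
   [pi_sigma <= pi_Js], and [sigma] shares at least [ny - 2q] sensors with
   [Js], so it contains an attack-free [S]; then
   [|xhat_sigma - x| <= pi_sigma + |xhat_S - x|].  Summing the class-KL bounds
   of all observers gives a single class-KL bound [betab]. *)

From HB Require Import structures.
From mathcomp Require Import all_boot all_order all_algebra.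
From mathcomp Require Import all_classical all_reals all_analysis.
From mathcomp Require Import ring lra zify.
Import Order.TTheory GRing.Theory Num.Theory.
Local Open Scope ring_scope.

Lemma lagrange_identity {R : comPzRingType} {m : nat} (a b : 'I_m -> R) :
  \sum_i \sum_j (a i * b j - a j * b i) ^+ 2 =
  (\sum_i a i ^+ 2) * (\sum_j b j ^+ 2) + (\sum_i b i ^+ 2) * (\sum_j a j ^+ 2)
  - 2 * ((\sum_i a i * b i) * (\sum_j a j * b j)).
Proof.
rewrite !big_distrlr mulr_sumr -big_split -sumrB /=; apply: eq_bigr => i _.
rewrite mulr_sumr -big_split -sumrB /=; apply: eq_bigr => j _; ring.
Qed.

Lemma cauchy_schwarz {R : realType} {m : nat} (a b : 'I_m -> R) :
  \sum_i a i * b i <= Num.sqrt (\sum_i a i ^+ 2) * Num.sqrt (\sum_i b i ^+ 2).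
Proof.
set A := \sum_i a i ^+ 2; set B := \sum_i b i ^+ 2; set C := \sum_i a i * b i.
have A_ge0 : 0 <= A by apply: sumr_ge0 => i _; exact: sqr_ge0.
have C2_le : C ^+ 2 <= A * B.
  have := lagrange_identity a b; rewrite -/A -/B -/C => lag.
  have : 0 <= \sum_i \sum_j (a i * b j - a j * b i) ^+ 2.
    by apply: sumr_ge0 => i _; apply: sumr_ge0 => j _; exact: sqr_ge0.
  rewrite lag expr2 (mulrC B); lra.
rewrite -sqrtrM // (le_trans (ler_norm C)) // -sqrtr_sqr; exact: ler_wsqrtr.
Qed.

Lemma enorm_ge0 {R : realType} {m : nat} (v : 'cV[R]_m) : 0 <= enorm v.
Proof. exact: sqrtr_ge0. Qed.

Lemma enormN {R : realType} {m : nat} (v : 'cV[R]_m) : enorm (- v) = enorm v.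
Proof.
by rewrite /enorm; congr Num.sqrt; apply: eq_bigr => i _; rewrite mxE sqrrN.
Qed.

Lemma enorm_distC {R : realType} {m : nat} (v w : 'cV[R]_m) :
  enorm (v - w) = enorm (w - v).
Proof. by rewrite -enormN opprB. Qed.

Lemma enormD {R : realType} {m : nat} (v w : 'cV[R]_m) :
  enorm (v + w) <= enorm v + enorm w.
Proof.
rewrite /enorm; have := cauchy_schwarz (fun i => v i 0) (fun i => w i 0).
set A := \sum_i v i 0 ^+ 2; set B := \sum_i w i 0 ^+ 2; set C := \sum_i _ * _ => CS.
have expand : \sum_i (v + w) i 0 ^+ 2 = A + 2 * C + B.
  rewrite mulr_sumr -!big_split /=; apply: eq_bigr => i _; rewrite mxE; ring.
have A_ge0 : 0 <= A by apply: sumr_ge0 => i _; exact: sqr_ge0.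
have B_ge0 : 0 <= B by apply: sumr_ge0 => i _; exact: sqr_ge0.
rewrite expand -(ger0_norm (addr_ge0 (sqrtr_ge0 A) (sqrtr_ge0 B))) -sqrtr_sqr.
by apply: ler_wsqrtr; rewrite sqrrD !sqr_sqrtr //; lra.
Qed.

Lemma enorm_triangle {R : realType} {m : nat} (u v w : 'cV[R]_m) :
  enorm (u - w) <= enorm (u - v) + enorm (v - w).
Proof. by rewrite -[u - w](subrKA v) enormD. Qed.

Section ClassKL.
Context {R : realType}.
Implicit Types (beta gamma : R -> nat -> R) (s t : R) (k : nat).

Lemma classKL_le {beta} k {s t} :
  classKL beta -> 0 <= s -> s <= t -> beta s k <= beta t k.
Proof.
move=> [Kbeta _] s_ge0; rewrite le_eqVlt => /predU1P[-> // | lt_st].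
by have [_ _ /(_ s t s_ge0 lt_st)/ltW] := Kbeta k.
Qed.

Lemma classKL_ge0 {beta} k {s} : classKL beta -> 0 <= s -> 0 <= beta s k.
Proof.
move=> KLbeta s_ge0; have := classKL_le k KLbeta (lexx 0) s_ge0.
by case: KLbeta => /(_ k)[->].
Qed.

Lemma classKLD {beta gamma} :
  classKL beta -> classKL gamma -> classKL (fun s k => beta s k + gamma s k).
Proof.
move=> [Kbeta Lbeta] [Kgamma Lgamma]; split=> [k | s s_ge0].
  have [beta0 beta_cont beta_mono] := Kbeta k.
  have [gamma0 gamma_cont gamma_mono] := Kgamma k.
  split=> [|x|s t s_ge0 lt_st]; first by rewrite beta0 gamma0 addr0.
    exact: cvgD (beta_cont x) (gamma_cont x).
  by rewrite ltrD ?beta_mono ?gamma_mono.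
have [beta_dec beta_cvg] := Lbeta s s_ge0.
have [gamma_dec gamma_cvg] := Lgamma s s_ge0.
split=> [k|]; first by rewrite lerD.
by rewrite -[0](addr0 0); exact: cvgD.
Qed.

Lemma classKL_sum_seq {I : Type} (r : seq I) (F : I -> R -> nat -> R) :
  (0 < size r)%N -> (forall i, classKL (F i)) ->
  classKL (fun s k => \sum_(i <- r) F i s k).
Proof.
case: r => [//|i r] _ KLF; elim: r i => [|j r IH] i.
  by under eq_fun do under eq_fun do rewrite big_seq1; exact: KLF.
under eq_fun do under eq_fun do rewrite big_cons.
exact: classKLD (KLF i) (IH j).
Qed.

Lemma classKL_sum {I : finType} (i0 : I) (F : I -> R -> nat -> R) :
  (forall i, classKL (F i)) -> classKL (fun s k => \sum_i F i s k).
Proof. by apply: classKL_sum_seq; case: (index_enum I) (mem_index_enum i0). Qed.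

Lemma classKL_le_sum {I : finType} {F : I -> R -> nat -> R} j k {s t} :
  (forall i, classKL (F i)) -> 0 <= s -> s <= t -> F j s k <= \sum_i F i t k.
Proof.
move=> KLF s_ge0 le_st; apply: le_trans (classKL_le k (KLF j) s_ge0 le_st) _.
rewrite (bigD1 j) //= lerDl; apply: sumr_ge0 => i _.
exact: classKL_ge0 (KLF i) (le_trans s_ge0 le_st).
Qed.

End ClassKL.

Lemma exists_subset_card {T : finType} (A : {set T}) m :
  (m <= #|A|)%N -> exists2 S : {set T}, S \subset A & #|S| = m.
Proof.
move=> le_mA; exists [set x in take m (enum A)].
  by apply/fintype.subsetP => x; rewrite inE => /mem_take; rewrite mem_enum.
rewrite cardsE (card_uniqP _) ?take_uniq ?enum_uniq // size_take -cardE.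
by case: ltnP => // le_Am; apply/eqP; rewrite eqn_leq le_mA le_Am.
Qed.

Lemma card_setI_ge {T : finType} (A B : {set T}) :
  (#|A| + #|B| <= #|T| + #|A :&: B|)%N.
Proof. by rewrite -cardsUI leq_add2r max_card. Qed.

Lemma subv_attack_free {R : realType} {ny : nat} {ay : nat -> 'cV[R]_ny}
    {J : {set 'I_ny}} k :
  J \subset ~: Wy ay -> subv J (ay k) = 0.
Proof.
move=> J_free; apply/matrixP => i j; rewrite !mxE.
have := fintype.subsetP J_free _ (enum_valP i).
rewrite !inE => /asboolPn no_attack.
by apply: contra_notP no_attack; exists k.
Qed.

Section Observers.
Context {R : realType} {n nu ny : nat}.
Context {f : 'cV[R]_n -> 'cV[R]_n} {h : 'cV[R]_n -> 'cV[R]_ny} {B : 'M[R]_(n, nu)}.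

Local Notation observer J :=
  ('cV[R]_n -> 'cV[R]_nu -> 'cV[R]_#|J| -> 'cV[R]_#|J| -> 'cV[R]_n).

Definition UIO_gain {J : {set 'I_ny}} (fJ : observer J) (beta : R -> nat -> R) :=
  forall x0 xh0 (u au : nat -> 'cV[R]_nu) (ay : nat -> 'cV[R]_ny),
    (forall k, subv J (ay k) = 0) ->
    let x := traj f B x0 u au in
    let e := fun k => obs fJ xh0 u (outp h x ay) k - x k in
    forall k, enorm (e k) <= beta (enorm (e 0%N)) k.

Context {P : pred {set 'I_ny}} {fJ : forall J : {set 'I_ny}, observer J}.

Lemma UIO_gains_choice {beta0 : R -> nat -> R} :
  classKL beta0 -> (forall J, P J -> complete_UIO f h B (fJ J)) ->
  exists beta : {set 'I_ny} -> R -> nat -> R,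
    (forall J, classKL (beta J)) /\ (forall J, P J -> UIO_gain (fJ J) (beta J)).
Proof.
move=> KLbeta0 UIO.
(* Outside [P] any class-KL function will do; it keeps every [beta J]
   class-KL, so that finite sums of them are class-KL. *)
have /choice[beta gain] : forall J, exists beta,
    classKL beta /\ (P J -> UIO_gain (fJ J) beta).
  move=> J; have [/UIO[beta [KLbeta gainJ]] | _] := boolP (P J).
    by exists beta.
  by exists beta0.
by exists beta; split=> J; have [] := gain J.
Qed.

Lemma attack_free_error_le {beta : {set 'I_ny} -> R -> nat -> R} :
    (forall J, classKL (beta J)) -> (forall J, P J -> UIO_gain (fJ J) (beta J)) ->
  forall x0 xh0 (u au : nat -> 'cV[R]_nu) (ay : nat -> 'cV[R]_ny) J e0 k,
    let x := traj f B x0 u au in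
    let xh := obs (fJ J) xh0 u (outp h x ay) in
    P J -> J \subset ~: Wy ay -> enorm (xh 0%N - x 0%N) <= e0 ->
    enorm (xh k - x k) <= \sum_J' beta J' e0 k.
Proof.
move=> KLbeta gain x0 xh0 u au ay J e0 k x xh PJ J_free e0_ge.
have := gain J PJ x0 xh0 u au ay (fun k => subv_attack_free k J_free) k.
by move/le_trans; apply; apply: classKL_le_sum (enorm_ge0 _) e0_ge.
Qed.

End Observers.

Section Selection.
Context {R : realType} {n ny q k : nat} {TJ TS : R}.
Context {xhJ xhS : {set 'I_ny} -> nat -> 'cV[R]_n} {x : nat -> 'cV[R]_n}.
Variable W : {set 'I_ny}.
Hypothesis card_W : (ny - q <= #|W|)%N.
Hypothesis errJ : forall J : {set 'I_ny}, #|J| = (ny - q)%N -> J \subset W ->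
  enorm (xhJ J k - x k) <= TJ.
Hypothesis errS : forall S : {set 'I_ny}, #|S| = (ny - 2 * q)%N -> S \subset W ->
  enorm (xhS S k - x k) <= TS.

Lemma piJ_le (J : {set 'I_ny}) :
  #|J| = (ny - q)%N -> J \subset W -> piJ q xhJ xhS J k <= TJ + TS.
Proof.
move=> cardJ JW.
have [S SJ cardS] : exists2 S : {set 'I_ny}, S \subset J & #|S| = (ny - 2 * q)%N.
  by apply: exists_subset_card; rewrite cardJ; lia.
have TJ_ge0 : 0 <= TJ := le_trans (enorm_ge0 _) (errJ _ cardJ JW).
have TS_ge0 : 0 <= TS.
  exact: le_trans (enorm_ge0 _) (errS _ cardS (fintype.subset_trans SJ JW)).
apply: bigmax_le => [|S' /andP[S'J /eqP cardS']]; first exact: addr_ge0.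
apply: le_trans (enorm_triangle _ (x k) _) _; rewrite [enorm (x k - _)]enorm_distC.
by rewrite lerD ?errJ ?errS // (fintype.subset_trans S'J JW).
Qed.

Lemma selected_error_le (sigma : {set 'I_ny}) :
  #|sigma| = (ny - q)%N ->
  (forall J : {set 'I_ny}, #|J| = (ny - q)%N ->
     piJ q xhJ xhS sigma k <= piJ q xhJ xhS J k) ->
  enorm (xhJ sigma k - x k) <= TJ + (TS + TS).
Proof.
move=> card_sigma sigma_min.
have [J JW cardJ] := exists_subset_card W (ny - q) card_W.
have card_sigmaJ : (ny - 2 * q <= #|sigma :&: J|)%N.
  by have := card_setI_ge sigma J; rewrite card_sigma cardJ card_ord; lia.
have [S SsJ cardS] := exists_subset_card _ _ card_sigmaJ.
have [Ssigma SJ] : S \subset sigma /\ S \subset J.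
  by split; apply: fintype.subset_trans SsJ _;
    [exact: finset.subsetIl | exact: finset.subsetIr].
have pi_sigma : enorm (xhJ sigma k - xhS S k) <= piJ q xhJ xhS sigma k.
  by apply: le_bigmax_cond; rewrite Ssigma cardS eqxx.
apply: le_trans (enorm_triangle _ (xhS S k) _) _; rewrite addrA lerD //.
  by rewrite (le_trans pi_sigma) // (le_trans (sigma_min J cardJ)) // piJ_le.
by rewrite errS // (fintype.subset_trans SJ JW).
Qed.

End Selection.

Theorem theorem1 (R : realType) (n nu ny : nat)
  (f : 'cV[R]_n -> 'cV[R]_n) (h : 'cV[R]_n -> 'cV[R]_ny) (B : 'M[R]_(n, nu))
  (HB : \rank B = nu)
  (q : nat) (Hq : q_prop f h B q) (Hqmax : forall q', q_prop f h B q' -> (q' <= q)%N)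
  (Hqlt : (2 * q < ny)%N)
  (fJ : forall J : {set 'I_ny},
        'cV[R]_n -> 'cV[R]_nu -> 'cV[R]_#|J| -> 'cV[R]_#|J| -> 'cV[R]_n)
  (fS : forall S : {set 'I_ny},
        'cV[R]_n -> 'cV[R]_nu -> 'cV[R]_#|S| -> 'cV[R]_#|S| -> 'cV[R]_n)
  (HfJ : forall J : {set 'I_ny}, #|J| = (ny - q)%N -> complete_UIO f h B (fJ J))
  (HfS : forall S : {set 'I_ny}, #|S| = (ny - 2 * q)%N -> complete_UIO f h B (fS S)) :
  exists betab : R -> nat -> R, classKL betab /\
    forall (x0 : 'cV[R]_n) (u au : nat -> 'cV[R]_nu) (ay : nat -> 'cV[R]_ny)
           (xhJ0 xhS0 : {set 'I_ny} -> 'cV[R]_n) (sigma : nat -> {set 'I_ny}),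
      (#|Wy ay| <= q)%N ->
      let x := traj f B x0 u au in
      let y := outp h x ay in
      let xhJ := fun J k => obs (fJ J) (xhJ0 J) u y k in
      let xhS := fun S k => obs (fS S) (xhS0 S) u y k in
      (forall k, #|sigma k| = (ny - q)%N /\
         forall J : {set 'I_ny}, #|J| = (ny - q)%N ->
           piJ q xhJ xhS (sigma k) k <= piJ q xhJ xhS J k) ->
      let e0 := Num.max
        (\big[Num.max/0]_(J : {set 'I_ny} | #|J| == (ny - q)%N) enorm (xhJ J 0%N - x 0%N))
        (\big[Num.max/0]_(S : {set 'I_ny} | #|S| == (ny - 2 * q)%N) enorm (xhS S 0%N - x 0%N)) in
      forall k, enorm (xhJ (sigma k) k - x k) <= betab e0 k.
Proof.
have [J0 _ card_J0] :
    exists2 J0 : {set 'I_ny}, J0 \subset [set: 'I_ny] & #|J0| = (ny - q)%N.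
  by apply: exists_subset_card; rewrite cardsT card_ord leq_subr.
have [beta0 [KLbeta0 _]] := HfJ J0 card_J0.
have [bJ [KLbJ gainJ]] := UIO_gains_choice (P := fun J => #|J| == ny - q)%N
  KLbeta0 (fun J => HfJ J \o eqP).
have [bS [KLbS gainS]] := UIO_gains_choice (P := fun S => #|S| == ny - 2 * q)%N
  KLbeta0 (fun S => HfS S \o eqP).
pose TJ s k := \sum_J bJ J s k; pose TS s k := \sum_S bS S s k.
exists (fun s k => TJ s k + (TS s k + TS s k)); split.
  by apply: classKLD; [|apply: classKLD]; apply: (classKL_sum J0).
move=> x0 u au ay xhJ0 xhS0 sigma card_Wy x y xhJ xhS sigma_min e0 k.
have [card_sigma sigma_le] := sigma_min k.
apply: (selected_error_le (~: Wy ay) _ _ _ _ card_sigma sigma_le).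
- by have := cardsC (Wy ay); rewrite card_ord; lia.
- move=> J cardJ J_free.
  apply: (attack_free_error_le KLbJ gainJ) => //=; first exact/eqP.
  rewrite le_max; apply/orP; left; apply: le_bigmax_cond; exact/eqP.
- move=> S cardS S_free.
  apply: (attack_free_error_le KLbS gainS) => //=; first exact/eqP.
  rewrite le_max; apply/orP; right; apply: le_bigmax_cond; exact/eqP.
Qed.
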